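(* Consider the wireless network described in the context, with nodes sending independent codewords under decode-and-forward (DF). Suppose the nearest neighbor algorithm (NNA) terminates normally, producing a route $\mathcal{M}^{\mathrm{NNA}}$ from the source (node $1$) to the destination (node $D$). Then $\mathcal{M}^{\mathrm{NNA}}$ is optimal for DF: $$R_{\mathrm{DF}}(\mathcal{M}^{\mathrm{NNA}}) = R_{\mathrm{DF}}^{\max} = \max_{\mathcal{M}} R_{\mathrm{DF}}(\mathcal{M}),$$ where the maximum is over all routes $\mathcal{M}$ from node $1$ to node $D$.
   Context: Network: a finite set of nodes $\mathcal{S}=\{1,2,\dots,D\}$, $D\ge 2$. Node $1$ is the source and node $D$ is the destination. Received powers: for distinct nodes $i,t$, the power received at $t$ from $i$ is a positive real number $P_{it}$. In the paper $P_{it}=\kappa d_{it}^{-\eta}P_i$, where $P_i>0$ is the transmit power, $d_{it}$ the distance, $\eta\ge 2$ and $\kappa>0$. All receivers have the same noise power $N>0$. Routes: a route is an ordered tuple of distinct nodes $\mathcal{M}=(m_1,\dots,m_L)$ with $m_1=1$ and $L\ge1$. It is a route from the source to the destination if moreover $m_L=D$. For a route $\mathcal{M}$ and a node $a\notin\mathcal{M}$, $\mathcal{M}\cup\{a\}$ denotes the route $(m_1,\dots,m_L,a)$; appending an ordered tuple of nodes is defined the same way. DF with independent codewords: the reception rate of node $m_t$ ($2\le t\le L$) in route $\mathcal{M}$ is $$R_{m_t}(\mathcal{M})=\tfrac12\log\Big(1+N^{-1}\sum_{i=1}^{t-1}P_{m_i m_t}\Big).$$ The DF rate supported by $\mathcal{M}$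 (for $L\ge2$) is $R_{\mathrm{DF}}(\mathcal{M})=\min_{2\le t\le L}R_{m_t}(\mathcal{M})$. Also $R_{\mathrm{DF}}^{\max}=\max R_{\mathrm{DF}}(\mathcal{M})$ over all routes from $1$ to $D$. A route from $1$ to $D$ is optimal for DF if it attains $R_{\mathrm{DF}}^{\max}$. Nearest neighbor: node $i\notin\mathcal{M}$ is a nearest neighbor with respect to route $\mathcal{M}$ iff $P_{mi}\ge P_{mj}$ for all $m\in\mathcal{M}$ and all $j\in\mathcal{S}\setminus(\mathcal{M}\cup\{i\})$. NNA: 1. Start with $\mathcal{M}=(1)$. 2. If there is a unique nearest neighbor $i^*$ with respect to the current $\mathcal{M}$, set $\mathcal{M}\leftarrow\mathcal{M}\cup\{i^*\}$; otherwise the algorithm terminates prematurely. 3. Repeat step 2 until node $D$ has been appended, in which case the algorithm terminates normally and outputs $\mathcal{M}$. *)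

From Stdlib Require Import Reals List.
Import ListNotations.
Open Scope R_scope.

(* Nodes are the natural numbers 1..D; node 1 is the source, node D the destination. *)
Definition node_in (D : nat) (i : nat) : Prop := (1 <= i <= D)%nat.

Definition is_route (D : nat) (M : list nat) : Prop :=
  NoDup M /\ (forall m, In m M -> node_in D m) /\ head M = Some 1%nat.

Definition is_route_1D (D : nat) (M : list nat) : Prop :=
  is_route D M /\ last M 0%nat = D.

Definition recv_rate (P : nat -> nat -> R) (N : R) (prefix : list nat) (x : nat) : R :=
  / 2 * ln (1 + / N * fold_right Rplus 0 (map (fun m => P m x) prefix)).

(* The list [R_{m_2}(M); ...; R_{m_L}(M)], computed with the already visited prefix. *)
Fixpoint rates_aux (P : nat -> nat -> R) (N : R) (prefix rest : list nat) : list R :=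
  match rest with
  | [] => []
  | x :: rest' => recv_rate P N prefix x :: rates_aux P N (prefix ++ [x]) rest'
  end.

Definition rates (P : nat -> nat -> R) (N : R) (M : list nat) : list R :=
  match M with
  | [] => []
  | m1 :: rest => rates_aux P N [m1] rest
  end.

(* R_DF(M) = min_{2 <= t <= L} R_{m_t}(M)  (meaningful for L >= 2). *)
Definition R_DF (P : nat -> nat -> R) (N : R) (M : list nat) : R :=
  match rates P N M with
  | [] => 0
  | r :: rs => fold_left Rmin rs r
  end.

Definition nearest_neighbor (D : nat) (P : nat -> nat -> R) (M : list nat) (i : nat) : Prop :=
  node_in D i /\ ~ In i M /\
  forall m j, In m M -> node_in D j -> ~ In j M -> j <> i -> P m j <= P m i.

Definition unique_nearest_neighbor (D : nat) (P : nat -> nat -> R) (M : list nat) (i : nat) : Prop :=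
  nearest_neighbor D P M i /\ forall j, nearest_neighbor D P M j -> j = i.

Inductive nna_reach (D : nat) (P : nat -> nat -> R) : list nat -> Prop :=
  | nna_start : nna_reach D P [1%nat]
  | nna_step : forall M i,
      nna_reach D P M -> ~ In D M -> unique_nearest_neighbor D P M i ->
      nna_reach D P (M ++ [i]).

Definition nna_output (D : nat) (P : nat -> nat -> R) (M : list nat) : Prop :=
  nna_reach D P M /\ In D M.

From Stdlib Require Import Reals List Lra Lia.
Import ListNotations.
Open Scope R_scope.

(* Let A = (1, a_2, ..., a_L) be the NNA output.  The DF rate of A is a
   minimum over its reception rates, so it equals the reception rate of some
   node x of A, received from the prefix [pre] of A preceding x; by
   construction of the NNA, x is the unique nearest neighbour of [pre] and D
   does not occur in [pre].  Now take any route M from 1 to D.  Since M starts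
   inside [pre] and ends at D outside it, M has a first node y outside [pre],
   and every node before y lies in [pre].  Hence
     R_DF(M) <= R_y(M) <= rate of x from those nodes <= R_x(A) = R_DF(A),
   using that x is nearest (P m y <= P m x for m in [pre]), positivity of the
   powers, and monotonicity of the logarithm. *)

Definition power_sum (f : nat -> R) (l : list nat) : R := fold_right Rplus 0 (map f l).

Lemma power_sum_app (f : nat -> R) (l1 l2 : list nat) :
  power_sum f (l1 ++ l2) = power_sum f l1 + power_sum f l2.
Proof.
  unfold power_sum; induction l1 as [|a l1 IH]; simpl; [lra|].
  rewrite IH; lra.
Qed.

Lemma power_sum_nonneg (f : nat -> R) (l : list nat) :
  (forall m, In m l -> 0 <= f m) -> 0 <= power_sum f l.
Proof.
  unfold power_sum; induction l as [|a l IH]; simpl; intros Hf; [lra|].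
  pose proof (Hf a (or_introl eq_refl)).
  assert (0 <= fold_right Rplus 0 (map f l)) by (apply IH; auto).
  lra.
Qed.

Lemma power_sum_le_pointwise (f g : nat -> R) (l : list nat) :
  (forall m, In m l -> f m <= g m) -> power_sum f l <= power_sum g l.
Proof.
  unfold power_sum; induction l as [|a l IH]; simpl; intros Hfg; [lra|].
  pose proof (Hfg a (or_introl eq_refl)).
  assert (fold_right Rplus 0 (map f l) <= fold_right Rplus 0 (map g l))
    by (apply IH; auto).
  lra.
Qed.

Lemma power_sum_incl (f : nat -> R) (q : list nat) :
  forall l, NoDup q -> incl q l -> (forall m, In m l -> 0 <= f m) ->
  power_sum f q <= power_sum f l.
Proof.
  induction q as [|a q IH]; intros l Hq Hincl Hf.
  - apply power_sum_nonneg; exact Hf.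
  - inversion Hq as [|? ? Ha_q Hq']; subst.
    destruct (in_split a l (Hincl a (or_introl eq_refl))) as [l1 [l2 ->]].
    assert (Hrest : power_sum f q <= power_sum f (l1 ++ l2)).
    { apply IH; auto.
      - intros z Hz.
        destruct (in_app_or _ _ _ (Hincl z (or_intror Hz))) as [H|[H|H]];
          apply in_or_app; auto.
        subst; contradiction.
      - intros m Hm; apply Hf.
        destruct (in_app_or _ _ _ Hm); apply in_or_app; simpl; auto. }
    assert (0 <= f a) by (apply Hf; apply in_or_app; simpl; auto).
    rewrite power_sum_app in *; unfold power_sum in *; simpl in *.
    lra.
Qed.

Lemma ln_le_compat (x y : R) : 0 < x -> x <= y -> ln x <= ln y.
Proof.
  intros Hx [Hlt | Heq]; [left; apply ln_increasing; auto | rewrite Heq; lra].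
Qed.

Lemma recv_rate_le (P : nat -> nat -> R) (N : R) (q pre : list nat) (y x : nat) :
  0 < N ->
  0 <= power_sum (fun m => P m y) q ->
  power_sum (fun m => P m y) q <= power_sum (fun m => P m x) pre ->
  recv_rate P N q y <= recv_rate P N pre x.
Proof.
  intros HN Hnonneg Hle; unfold recv_rate.
  fold (power_sum (fun m => P m y) q) (power_sum (fun m => P m x) pre).
  pose proof (Rinv_0_lt_compat N HN) as HinvN.
  apply Rmult_le_compat_l; [lra|].
  apply ln_le_compat.
  - pose proof (Rmult_le_pos _ _ (Rlt_le _ _ HinvN) Hnonneg); lra.
  - apply Rplus_le_compat_l, Rmult_le_compat_l; lra.
Qed.

Lemma fold_min_lower_bound (rs : list R) :
  forall a r, In r (a :: rs) -> fold_left Rmin rs a <= r.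
Proof.
  induction rs as [|b rs IH]; simpl; intros a r Hr.
  - destruct Hr as [-> | []]; lra.
  - destruct Hr as [-> | [-> | Hr]].
    + pose proof (IH (Rmin r b) (Rmin r b) (or_introl eq_refl)).
      pose proof (Rmin_l r b); lra.
    + pose proof (IH (Rmin a r) (Rmin a r) (or_introl eq_refl)).
      pose proof (Rmin_r a r); lra.
    + apply IH; right; exact Hr.
Qed.

Lemma fold_min_attained (rs : list R) :
  forall a, In (fold_left Rmin rs a) (a :: rs).
Proof.
  induction rs as [|b rs IH]; simpl; intros a; [auto|].
  destruct (IH (Rmin a b)) as [<-|H]; [|auto].
  destruct (Rle_dec a b) as [Hab|Hab].
  - rewrite Rmin_left by exact Hab; auto.
  - rewrite Rmin_right by lra; auto.
Qed.

Lemma rates_aux_in (P : nat -> nat -> R) (N : R) (l1 : list nat) :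
  forall prefix x l2,
  In (recv_rate P N (prefix ++ l1) x) (rates_aux P N prefix (l1 ++ x :: l2)).
Proof.
  induction l1 as [|a l1 IH]; intros prefix x l2; simpl.
  - rewrite app_nil_r; left; reflexivity.
  - right. specialize (IH (prefix ++ [a]) x l2).
    rewrite <- app_assoc in IH; exact IH.
Qed.

Lemma rates_aux_inv (P : nat -> nat -> R) (N : R) (rest : list nat) :
  forall prefix r, In r (rates_aux P N prefix rest) ->
  exists l1 x l2, rest = l1 ++ x :: l2 /\ r = recv_rate P N (prefix ++ l1) x.
Proof.
  induction rest as [|a rest IH]; simpl; intros prefix r Hr; [contradiction|].
  destruct Hr as [<-|Hr].
  - exists [], a, rest; rewrite app_nil_r; auto.
  - destruct (IH _ _ Hr) as [l1 [x [l2 [-> ->]]]].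
    exists (a :: l1), x, l2; rewrite <- app_assoc; auto.
Qed.

Lemma R_DF_le_rate (P : nat -> nat -> R) (N : R) (m1 : nat) (l1 l2 : list nat) (x : nat) :
  R_DF P N (m1 :: l1 ++ x :: l2) <= recv_rate P N (m1 :: l1) x.
Proof.
  unfold R_DF, rates.
  pose proof (rates_aux_in P N l1 [m1] x l2) as Hin.
  destruct (rates_aux P N [m1] (l1 ++ x :: l2)) as [|r rs]; [contradiction|].
  apply fold_min_lower_bound; exact Hin.
Qed.

Lemma R_DF_attained (P : nat -> nat -> R) (N : R) (m1 : nat) (rest : list nat) :
  rest <> [] ->
  exists l1 x l2, rest = l1 ++ x :: l2 /\ R_DF P N (m1 :: rest) = recv_rate P N (m1 :: l1) x.
Proof.
  intros Hne; unfold R_DF, rates.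
  destruct (rates_aux P N [m1] rest) as [|r rs] eqn:Erates.
  - destruct rest; [congruence | discriminate].
  - assert (Hin : In (fold_left Rmin rs r) (rates_aux P N [m1] rest))
      by (rewrite Erates; apply fold_min_attained).
    exact (rates_aux_inv P N rest [m1] _ Hin).
Qed.

Lemma nna_reach_route (D : nat) (P : nat -> nat -> R) (M : list nat) :
  (1 <= D)%nat -> nna_reach D P M -> is_route D M.
Proof.
  intros HD Hreach; induction Hreach as [|M i _ [Hnd [Hnodes Hhead]] _ [[Hi [Hi_M _]] _]].
  - split; [repeat constructor; simpl; tauto|].
    split; [|reflexivity].
    intros m [<-|[]]; unfold node_in; lia.
  - split; [|split].
    + apply NoDup_app; [exact Hnd | repeat constructor; simpl; tauto |].
      intros a Ha [<-|[]]; contradiction.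
    + intros m Hm; destruct (in_app_or _ _ _ Hm) as [H|[<-|[]]]; auto.
    + destruct M; [discriminate | exact Hhead].
Qed.

(* The NNA stops exactly when it appends D, so D is its last node. *)
Lemma nna_output_last (D : nat) (P : nat -> nat -> R) (M : list nat) :
  nna_output D P M -> last M 0%nat = D.
Proof.
  intros [Hreach HD]; destruct Hreach as [|M i _ HnotD _]; simpl in *.
  - destruct HD as [<-|[]]; reflexivity.
  - destruct (in_app_or _ _ _ HD) as [H|[<-|[]]]; [contradiction|].
    apply last_last.
Qed.

Lemma nna_reach_prefix (D : nat) (P : nat -> nat -> R) (M : list nat) :
  nna_reach D P M -> forall pre x post, M = pre ++ x :: post -> pre <> [] ->
  nearest_neighbor D P pre x /\ ~ In D pre.
Proof.
  intros Hreach; induction Hreach as [|M i Hreach IH HnotD [Hnn _]];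
    intros pre x post E Hne.
  - destruct pre as [|a [|b pre]]; simpl in E; [congruence | discriminate | discriminate].
  - destruct post as [|p post].
    + destruct (app_inj_tail _ _ _ _ E) as [-> ->]; auto.
    + destruct (exists_last (l := p :: post) ltac:(discriminate)) as [post' [z Hz]].
      rewrite Hz, app_comm_cons, app_assoc in E.
      destruct (app_inj_tail _ _ _ _ E) as [E' _].
      exact (IH pre x post' E' Hne).
Qed.

Lemma split_at_first_outside (pre M : list nat) (z : nat) :
  In z M -> ~ In z pre ->
  exists q y r, M = q ++ y :: r /\ incl q pre /\ ~ In y pre.
Proof.
  induction M as [|a M IH]; intros Hz Hz_pre; [contradiction|].
  destruct (in_dec Nat.eq_dec a pre) as [Ha|Ha].
  - destruct Hz as [<-|Hz]; [contradiction|].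
    destruct (IH Hz Hz_pre) as [q [y [r [-> [Hq Hy]]]]].
    exists (a :: q), y, r; repeat split; auto.
    intros w [<-|Hw]; auto.
  - exists [], a, M; repeat split; auto.
    intros w [].
Qed.

Lemma route_rate_le_nearest_rate (D : nat) (P : nat -> nat -> R) (N : R)
    (pre : list nat) (x : nat) (M : list nat) :
  (forall i t, node_in D i -> node_in D t -> i <> t -> 0 < P i t) ->
  0 < N ->
  (forall m, In m pre -> node_in D m) ->
  In 1%nat pre -> ~ In D pre ->
  nearest_neighbor D P pre x ->
  is_route_1D D M ->
  R_DF P N M <= recv_rate P N pre x.
Proof.
  intros HP HN Hpre H1pre HDpre [Hx [Hx_pre Hnearest]] [[Hnd [Hnodes Hhead]] Hlast].
  assert (HDM : In D M).
  { destruct M as [|m M]; [discriminate|].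
    rewrite <- Hlast; destruct (exists_last (l := m :: M) ltac:(discriminate)) as [M' [w ->]].
    rewrite last_last; apply in_or_app; simpl; auto. }
  destruct (split_at_first_outside pre M D HDM HDpre) as [q [y [r [-> [Hq Hy]]]]].
  destruct q as [|m1 q'].
  { simpl in Hhead; injection Hhead as ->; contradiction. }
  assert (Hy_node : node_in D y) by (apply Hnodes, in_or_app; simpl; auto).
  assert (Hq_nd : NoDup (m1 :: q')) by exact (NoDup_app_remove_r _ _ Hnd).
  assert (Hy_sum_nonneg : 0 <= power_sum (fun m => P m y) (m1 :: q')).
  { apply power_sum_nonneg; intros m Hm; left.
    apply HP; auto; intros ->; exact (Hy (Hq y Hm)). }
  assert (Hy_le_x : power_sum (fun m => P m y) (m1 :: q')
                    <= power_sum (fun m => P m x) (m1 :: q')).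
  { apply power_sum_le_pointwise; intros m Hm.
    destruct (Nat.eq_dec y x) as [->|Hyx]; [lra|].
    apply Hnearest; auto. }
  assert (Hq_le_pre : power_sum (fun m => P m x) (m1 :: q')
                      <= power_sum (fun m => P m x) pre).
  { apply power_sum_incl; auto; intros m Hm; left.
    apply HP; auto; intros ->; contradiction. }
  eapply Rle_trans; [apply R_DF_le_rate|].
  apply recv_rate_le; [exact HN | exact Hy_sum_nonneg | lra].
Qed.

Theorem theorem1 (D : nat) (P : nat -> nat -> R) (N : R) (M_NNA : list nat) :
  (2 <= D)%nat ->
  (forall i t, node_in D i -> node_in D t -> i <> t -> 0 < P i t) ->
  0 < N ->
  nna_output D P M_NNA ->
  is_route_1D D M_NNA /\
  (forall M, is_route_1D D M -> R_DF P N M <= R_DF P N M_NNA).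
Proof.
  intros HD HP HN Hout.
  assert (Hroute : is_route_1D D M_NNA).
  { split; [apply (nna_reach_route D P); [lia | apply Hout] | exact (nna_output_last D P _ Hout)]. }
  split; [exact Hroute|]; intros M HM.
  destruct Hroute as [[_ [Hnodes Hhead]] Hlast].
  destruct M_NNA as [|a rest]; [discriminate|]; simpl in Hhead; injection Hhead as ->.
  assert (Hrest : rest <> []) by (intros ->; simpl in Hlast; lia).
  destruct (R_DF_attained P N 1%nat rest Hrest) as [l1 [x [l2 [-> ->]]]].
  destruct (nna_reach_prefix D P _ (proj1 Hout) (1%nat :: l1) x l2 eq_refl ltac:(discriminate))
    as [Hnearest HDpre].
  apply (route_rate_le_nearest_rate D P N (1%nat :: l1) x M HP HN); auto.
  - intros m Hm; apply Hnodes; destruct Hm as [<-|Hm]; [left | right; apply in_or_app]; auto.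
  - left; reflexivity.
Qed.
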